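(* Let $L\subseteq\mathbb{Z}^{(\mathbb{N})}$ be a $\mathrm{Sym}$-invariant lattice. For $\mathbf{u}=(u_i)_{i\in\mathbb{N}}\in\mathbb{Z}^{(\mathbb{N})}$ set $s(\mathbf{u})=\sum_{i\in\mathbb{N}}u_i$, and let $s_L=\gcd(s(\mathbf{u})\mid\mathbf{u}\in L)$. Then (i) $s_L\mathbf{e}_1\in L$; (ii) if there exists $\mathbf{u}\in L$ with $s(\mathbf{u})\neq0$, then $s_L\mathbf{e}_1$ belongs to the Graver basis of $L$.
   Context: $\mathbb{N}=\{1,2,\dots\}$. $\mathbb{Z}^{(\mathbb{N})}$ is the group of finitely supported integer sequences with standard basis $\mathbf{e}_i$; a lattice is a subgroup. $\mathrm{Sym}$ is the group of permutations of $\mathbb{N}$ fixing all but finitely many points, acting by $\sigma(\mathbf{e}_i)=\mathbf{e}_{\sigma(i)}$; $L$ is $\mathrm{Sym}$-invariant if $\sigma(L)\subseteq L$ for all $\sigma$. $\mathbf{u}\sqsubseteq\mathbf{v}$ iff $u_iv_i\ge0$ and $|u_i|\le|v_i|$ for all $i$; the Graver basis of $L$ is the set of $\sqsubseteq$-minimal elements of $L\setminus\{\mathbf{0}\}$. *)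

From mathcomp Require Import all_boot all_order all_algebra.
Set Implicit Arguments. Unset Strict Implicit. Unset Printing Implicit Defensive.
Import Order.TTheory GRing.Theory Num.Theory.
Local Open Scope ring_scope.

(* Vectors are functions nat -> int; the index set N = {1,2,...} is the set of
   positive naturals, so an element of Z^(N) has u 0 = 0 and finite support. *)
Definition vec := nat -> int.

Definition in_ZN (u : vec) : Prop :=
  u 0%N = 0 /\ exists n : nat, forall i : nat, (n <= i)%N -> u i = 0.

Definition e (i : nat) : vec := fun j => if j == i then 1 else 0.

Definition vzero : vec := fun _ => 0.
Definition vsub (u v : vec) : vec := fun i => u i - v i.
Definition vscale (a : int) (u : vec) : vec := fun i => a * u i.

Definition lattice (L : vec -> Prop) : Prop :=
  (forall u, L u -> in_ZN u) /\ L vzero /\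
  (forall u v, L u -> L v -> L (vsub u v)).

Definition is_Sym (sigma tau : nat -> nat) : Prop :=
  sigma 0%N = 0%N /\ cancel sigma tau /\ cancel tau sigma /\
  exists n : nat, forall i : nat, (n <= i)%N -> sigma i = i.

(* sigma(e_i) = e_{sigma i}, extended linearly: (sigma u)_j = u_{sigma^-1 j} *)
Definition act (tau : nat -> nat) (u : vec) : vec := fun j => u (tau j).

Definition sym_invariant (L : vec -> Prop) : Prop :=
  forall sigma tau, is_Sym sigma tau -> forall u, L u -> L (act tau u).

Definition coord_sum (u : vec) (k : int) : Prop :=
  exists n : nat, (forall i : nat, (n <= i)%N -> u i = 0) /\
                  \sum_(i < n) u i = k.

Definition is_sL (L : vec -> Prop) (g : int) : Prop :=
  0 <= g /\
  (forall u k, L u -> coord_sum u k -> (g %| k)%Z) /\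
  (forall d : int, (forall u k, L u -> coord_sum u k -> (d %| k)%Z) ->
                   (d %| g)%Z).

Definition conf_le (u v : vec) : Prop :=
  forall i : nat, 0 <= u i * v i /\ `|u i| <= `|v i|.

Definition in_graver (L : vec -> Prop) (v : vec) : Prop :=
  L v /\ v <> vzero /\
  forall u, L u -> u <> vzero -> conf_le u v -> u = v.

From mathcomp Require Import all_boot all_order all_algebra.
From mathcomp Require Import zify ring.
From Stdlib Require Import Classical FunctionalExtensionality.
Import Order.TTheory GRing.Theory Num.Theory.
Set Implicit Arguments. Unset Strict Implicit. Unset Printing Implicit Defensive.
Local Open Scope ring_scope.

(* If u in L has support below N and coordinate sum k, then u minus its
   transposition (i N) is u_i (e_i - e_N); summing these over i and subtracting
   from u leaves k e_N in L, and the transposition (1 N) turns it into k e_1.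
   Hence the integers k with k e_1 in L are exactly the coordinate sums of L;
   they form a subgroup of Z, so they are the multiples of their gcd s_L.
   Finally, a nonzero v conformal to s_L e_1 is a multiple of e_1 whose entry
   has the sign of s_L, absolute value at most |s_L|, and is divisible by s_L,
   so v = s_L e_1. *)

Lemma dvdz_conform_eq (g a : int) :
  (g %| a)%Z -> a != 0 -> 0 <= a * g -> `|a| <= `|g| -> a = g.
Proof.
move=> /dvdzP [q ->]; rewrite mulf_eq0 negb_or => /andP [q0 g0].
rewrite -mulrA normrM; nia.
Qed.

Section IntSubgroup.
Variable K : int -> Prop.
Hypothesis K0 : K 0.
Hypothesis KB : forall a b, K a -> K b -> K (a - b).

Lemma subgroupN a : K a -> K (- a).
Proof. by move=> Ka; rewrite -sub0r; apply: KB. Qed.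

Lemma subgroupMz q a : K a -> K (q * a).
Proof.
move=> Ka; have Kn (n : nat) : K (n%:Z * a).
  elim: n => [|n IHn]; first by rewrite mul0r.
  rewrite intS mulrDl mul1r -[_ + _]opprK opprD.
  by apply/subgroupN/KB => //; apply: subgroupN.
by case: q => n; rewrite ?NegzE ?mulNr; [apply: Kn | apply/subgroupN/Kn].
Qed.

Lemma subgroup_principal : exists2 d, K d & forall k, K k -> (d %| k)%Z.
Proof.
case: (classic (exists k, K k /\ k <> 0)) => [[k [Kk k0]] | Ktriv]; last first.
  exists 0 => [//|k Kk]; rewrite dvd0z; apply/eqP; apply: NNPP => k0.
  by apply: Ktriv; exists k.
suff descent (h : nat) :
    (0 < h)%N -> K h -> exists2 d, K d & forall k, K k -> (d %| k)%Z.
  apply: (descent `|k|%N); first by rewrite absz_gt0; apply/eqP.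
  by rewrite abszE; case: (ger0P k) => _ //; apply: subgroupN.
elim/ltn_ind: h => h IHh h0 Kh.
case: (classic (exists k, K k /\ ~~ (h %| k)%Z)) => [[m [Km hNm]] | hdvd]; last first.
  exists (h : int) => [// | m Km]; apply/negPn/negP => hNm.
  by apply: hdvd; exists m.
have Kr : K (m %% h)%Z.
  have -> : (m %% h)%Z = m - (m %/ h)%Z * h by rewrite {2}(divz_eq m h) addrC addKr.
  by apply: KB => //; apply: subgroupMz.
have r_ge0 : 0 <= (m %% h)%Z by apply: modz_ge0; lia.
have r_lt : (m %% h)%Z < h by apply: ltz_pmod; lia.
have r_neq0 : (m %% h)%Z != 0 by apply: contra hNm => /eqP /dvdz_mod0P.
apply: (IHh `|(m %% h)%Z|%N); [lia | lia | by rewrite gez0_abs].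
Qed.

End IntSubgroup.

Definition transp (i j x : nat) : nat :=
  if x == i then j else if x == j then i else x.

Lemma transpK i j : involutive (transp i j).
Proof. by move=> x; rewrite /transp; do ! case: eqP => //=; lia. Qed.

Lemma transp_Sym i j : (0 < i)%N -> (0 < j)%N -> is_Sym (transp i j) (transp i j).
Proof.
move=> i0 j0; split; [|split; [exact: transpK | split; [exact: transpK|]]].
  by rewrite /transp; do ! case: eqP => //=; lia.
by exists (maxn i j).+1 => x x_gt; rewrite /transp; do ! case: eqP => //=; lia.
Qed.

Lemma transport_eqfun (P : vec -> Prop) u v : P u -> u =1 v -> P v.
Proof. by move=> Pu /functional_extensionality <-. Qed.

Lemma sum_scale_e n (c : nat -> int) x :
  \sum_(i < n) vscale (c i) (e i) x = if (x < n)%N then c x else 0.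
Proof.
rewrite -(big_ord1_eq +%R c x n) [RHS]big_mkcond; apply: eq_bigr => i _.
by rewrite /vscale /e eq_sym; case: eqP; rewrite ?mulr1 ?mulr0.
Qed.

Lemma coord_sum_scale_e a i : coord_sum (vscale a (e i)) a.
Proof.
exists i.+1; split => [x x_gt | ].
  by rewrite /vscale /e gtn_eqF // mulr0.
rewrite big_ord_recr big1 /= => [|x _]; rewrite /vscale /e.
  by rewrite eqxx mulr1 add0r.
by rewrite ltn_eqF // mulr0.
Qed.

Lemma conf_le_scale_e u a i : conf_le u (vscale a (e i)) -> u =1 vscale (u i) (e i).
Proof.
move=> u_le x; rewrite /vscale /e; case: eqP => [-> | /eqP x_neq]; first by rewrite mulr1.
have [_] := u_le x; rewrite /vscale /e (negbTE x_neq) mulr0 normr0 mulr0.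
by rewrite normr_le0 => /eqP.
Qed.

Section SymInvariantLattice.
Variable L : vec -> Prop.
Hypothesis latL : lattice L.

Lemma lattice0 : L vzero.
Proof. by case: latL => _ []. Qed.

Lemma lattice_sub u v : L u -> L v -> L (vsub u v).
Proof. by case: latL => _ [_]; apply. Qed.

Lemma lattice_add u v : L u -> L v -> L (fun x => u x + v x).
Proof.
move=> Lu Lv; apply: (transport_eqfun (lattice_sub Lu (lattice_sub lattice0 Lv))).
by move=> x; rewrite /vsub /vzero sub0r opprK.
Qed.

Lemma lattice_sum n (F : nat -> vec) :
  (forall i, (i < n)%N -> L (F i)) -> L (fun x => \sum_(i < n) F i x).
Proof.
elim: n => [|n IHn] LF.
  by apply: (transport_eqfun lattice0) => x; rewrite big_ord0.
apply: (transport_eqfun (lattice_add (IHn _) (LF n _))) => // [i i_lt|x].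
  by apply: LF; apply: ltnW.
by rewrite big_ord_recr.
Qed.

Lemma lattice_coord0 u : L u -> u 0%N = 0.
Proof. by case: latL => inZN _ /inZN []. Qed.

Lemma lattice_scale_sub a b v : L (vscale a v) -> L (vscale b v) -> L (vscale (a - b) v).
Proof.
move=> La Lb; apply: (transport_eqfun (lattice_sub La Lb)) => x.
by rewrite /vsub /vscale mulrBl.
Qed.

Hypothesis symL : sym_invariant L.

Lemma lattice_transp_diff u i j : (0 < i)%N -> (0 < j)%N -> L u ->
  L (vscale (u i - u j) (vsub (e i) (e j))).
Proof.
move=> i0 j0 Lu.
apply: (transport_eqfun (lattice_sub Lu (symL (transp_Sym i0 j0) Lu))) => x.
rewrite /vsub /vscale /act /e /transp.
by do ! case: eqP => //= *; subst; ring.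
Qed.

Lemma lattice_coord_sum u k : L u -> coord_sum u k -> L (vscale k (e 1)).
Proof.
move=> Lu [n [u_supp u_sum]]; set N := n.+2.
have Lterm i : (i < n)%N -> L (vscale (u i) (vsub (e i) (e N))).
  move=> i_lt; case: (posnP i) => [-> | i0].
    by apply: (transport_eqfun lattice0) => x; rewrite /vscale lattice_coord0 // mul0r.
  by rewrite -[u i]subr0 -(u_supp N); [apply: lattice_transp_diff | lia].
have LkN : L (vscale k (e N)).
  apply: (transport_eqfun (lattice_sub Lu (lattice_sum Lterm))) => x.
  rewrite {1}/vsub; under eq_bigr do rewrite /vscale /vsub mulrBr.
  rewrite sumrB -mulr_suml u_sum sum_scale_e /vsub /vscale.
  by case: ltnP => [_ | /u_supp ->]; rewrite opprB addrC subrK.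
apply: (transport_eqfun (symL (transp_Sym (isT : (0 < 1)%N) (isT : (0 < N)%N)) LkN)) => x.
rewrite /act /vscale /e /transp; do ! case: eqP => //; rewrite /N; lia.
Qed.

End SymInvariantLattice.

Lemma in_graver_scale_e (L : vec -> Prop) g i :
  L (vscale g (e i)) -> g != 0 ->
  (forall u k, L u -> coord_sum u k -> (g %| k)%Z) ->
  in_graver L (vscale g (e i)).
Proof.
move=> Lg g0 g_dvd; split; [done | split].
  by move=> /(congr1 (fun v => v i)); rewrite /vscale /e /vzero eqxx mulr1; apply/eqP.
move=> v Lv v_neq0 v_le.
have v_eq := conf_le_scale_e v_le.
have vi_neq0 : v i != 0.
  apply: contra_notN v_neq0 => /eqP vi0; apply: functional_extensionality => x.
  by rewrite v_eq vi0 /vscale mul0r.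
have g_dvd_vi : (g %| v i)%Z.
  apply: (g_dvd _ _ Lv).
  by rewrite {1}(functional_extensionality _ _ v_eq); apply: coord_sum_scale_e.
have [vg_ge0 vg_le] := v_le i; rewrite /vscale /e eqxx mulr1 in vg_ge0 vg_le.
apply: functional_extensionality => x.
by rewrite v_eq (dvdz_conform_eq g_dvd_vi).
Qed.

Lemma sL_scale_e1 (L : vec -> Prop) g :
  lattice L -> sym_invariant L -> is_sL L g -> L (vscale g (e 1)).
Proof.
move=> latL symL [_ [_ g_gcd]].
pose K k := L (vscale k (e 1)).
have K0 : K 0 by apply: (transport_eqfun (lattice0 latL)) => x; rewrite /vscale mul0r.
have KB a b : K a -> K b -> K (a - b) by apply: lattice_scale_sub.
have [d Kd d_dvd] := subgroup_principal K0 KB.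
have /dvdzP [q ->] : (d %| g)%Z.
  by apply: g_gcd => u k Lu /(lattice_coord_sum latL symL Lu) /d_dvd.
exact: (subgroupMz K0 KB).
Qed.

Theorem corollary4p7 (L : vec -> Prop) (g : int) :
  lattice L -> sym_invariant L -> is_sL L g ->
  L (vscale g (e 1%N)) /\
  ((exists u k, L u /\ coord_sum u k /\ k <> 0) ->
   in_graver L (vscale g (e 1%N))).
Proof.
move=> latL symL sLg; have Lg := sL_scale_e1 latL symL sLg.
split=> // [[u [k [Lu [u_sum k0]]]]].
have [_ [g_dvd _]] := sLg.
apply: in_graver_scale_e => //; apply: contra_notN k0 => /eqP g0.
by apply/eqP; rewrite -dvd0z -g0 (g_dvd u).
Qed.
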